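(* For $i=1,2$ let $\mathbf{L}_i=(L_i,\le)$ be a finite nontrivial join-semilattice with greatest element $1$ and let $(R_i,\vee,\circ)$ be a subsemiring of $(\mathrm{JM}(\mathbf{L}_i),\vee,\circ)$ such that $k_a\in R_i$ for all $a\in L_i$, every $f\in R_i$ satisfies $k_a\le f$ for some $a\in L_i$, and for all $a\in L_i$, $b\in L_i\setminus\{1\}$ there exists $f\in R_i$ with $f(x)=b$ for $x\le a$ and $f(x)>b$ otherwise. If $(R_1,\vee,\circ)$ and $(R_2,\vee,\circ)$ are isomorphic semirings, then $\mathbf{L}_1$ and $\mathbf{L}_2$ are isomorphic.
   Context: For a finite join-semilattice $\mathbf{L}$, $\mathrm{JM}(\mathbf{L})$ is the set of maps $L\to L$ preserving binary joins, a semiring under pointwise join and composition, ordered pointwise. $k_a$ denotes the constant map with value $a$. *)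

From mathcomp Require Import all_boot all_order.
Set Implicit Arguments. Unset Strict Implicit. Unset Printing Implicit Defensive.
Import Order.Theory.
Local Open Scope order_scope.

Definition join_morph (d : Order.disp_t) (L : joinSemilatticeType d) (f : L -> L) : Prop :=
  forall x y : L, f (x `|` y) = f x `|` f y.

Definition fjoin (d : Order.disp_t) (L : joinSemilatticeType d) (f g : L -> L) : L -> L :=
  fun x => f x `|` g x.

Definition kconst (d : Order.disp_t) (L : joinSemilatticeType d) (a : L) : L -> L :=
  fun _ => a.

Definition fle (d : Order.disp_t) (L : joinSemilatticeType d) (f g : L -> L) : Prop :=
  forall x, f x <= g x.

Definition subsemiring_JM (d : Order.disp_t) (L : joinSemilatticeType d)
  (R : (L -> L) -> Prop) : Prop :=
  [/\ (forall f, R f -> join_morph f),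
      (exists f, R f),
      (forall f g, R f -> R g -> R (fjoin f g)) &
      (forall f g, R f -> R g -> R (f \o g))].

Definition good_subsemiring (d : Order.disp_t) (L : finTJoinSemilatticeType d)
  (R : (L -> L) -> Prop) : Prop :=
  [/\ subsemiring_JM R,
      (forall a : L, R (kconst a)),
      (forall f, R f -> exists a : L, fle (kconst a) f) &
      (forall a b : L, b != \top ->
         exists f, R f /\ (forall x, (x <= a -> f x = b) /\ (~ (x <= a) -> b < f x)))].

Definition semiring_iso (d1 d2 : Order.disp_t)
  (L1 : joinSemilatticeType d1) (L2 : joinSemilatticeType d2)
  (R1 : (L1 -> L1) -> Prop) (R2 : (L2 -> L2) -> Prop)
  (phi : (L1 -> L1) -> (L2 -> L2)) : Prop :=
  [/\ (forall f, R1 f -> R2 (phi f)),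
      (forall f g, R1 f -> R1 g -> phi f = phi g -> f = g),
      (forall h, R2 h -> exists2 f, R1 f & phi f = h),
      (forall f g, R1 f -> R1 g -> phi (fjoin f g) = fjoin (phi f) (phi g)) &
      (forall f g, R1 f -> R1 g -> phi (f \o g) = phi f \o phi g)].

Definition order_iso (d1 d2 : Order.disp_t)
  (L1 : porderType d1) (L2 : porderType d2) (h : L1 -> L2) : Prop :=
  bijective h /\ (forall x y : L1, (h x <= h y) = (x <= y)).

(* The constant maps of R are exactly its left zeros, i.e. the f with
   f o g = f for all g in R: a left zero satisfies f = f o k_c = k_(f c).
   Being a left zero is a purely multiplicative property, so a semiring
   isomorphism restricts to a bijection k_a |-> k_(h a) between the constants,
   and h preserves joins since k_a \/ k_b = k_(a \/ b). A join-preserving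
   bijection is an order isomorphism. *)

From mathcomp Require Import all_boot all_order.
Set Implicit Arguments. Unset Strict Implicit.
Import Order.Theory.
Local Open Scope order_scope.

Lemma inj_surj_bij (T T' : finType) (f : T -> T') :
  injective f -> (forall y, exists x, f x = y) -> bijective f.
Proof.
move=> f_inj f_surj; apply: (inj_card_bij f_inj).
rewrite -(card_codom f_inj); apply/subset_leq_card/subsetP => y _.
by have [x <-] := f_surj y; apply: codom_f.
Qed.

Lemma join_inj_leE (d1 d2 : Order.disp_t)
    (L1 : joinSemilatticeType d1) (L2 : joinSemilatticeType d2) (h : L1 -> L2) :
  injective h -> {morph h : x y / x `|` y} -> forall x y, (h x <= h y) = (x <= y).
Proof. by move=> h_inj h_join x y; rewrite !leEjoin -h_join (inj_eq h_inj). Qed.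

Definition left_zero (T : Type) (R : (T -> T) -> Prop) (f : T -> T) : Prop :=
  forall g, R g -> f \o g = f.

Section LeftZeros.

Variables (d : Order.disp_t) (L : joinSemilatticeType d).
Implicit Types (R : (L -> L) -> Prop) (f : L -> L).

Lemma kconst_left_zero R (a : L) : left_zero R (kconst a).
Proof. by []. Qed.

Lemma left_zero_kconst R f (c : L) :
  R (kconst c) -> left_zero R f -> f = kconst (f c).
Proof. by move=> Rc f_lz; rewrite -[LHS](f_lz _ Rc). Qed.

Lemma fjoin_kconst (a b : L) : fjoin (kconst a) (kconst b) = kconst (a `|` b).
Proof. by []. Qed.

End LeftZeros.

Lemma semiring_iso_left_zeroP (d1 d2 : Order.disp_t)
    (L1 : joinSemilatticeType d1) (L2 : joinSemilatticeType d2)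
    (R1 : (L1 -> L1) -> Prop) (R2 : (L2 -> L2) -> Prop) phi f :
  (forall f g, R1 f -> R1 g -> R1 (f \o g)) ->
  semiring_iso R1 R2 phi -> R1 f -> left_zero R2 (phi f) <-> left_zero R1 f.
Proof.
move=> R1_comp [phiR phi_inj phi_surj _ phi_comp] R1f.
split=> [f_lz g R1g | f_lz _ /phi_surj[g R1g <-]].
  apply: phi_inj => //; first exact: R1_comp.
  by rewrite phi_comp // f_lz //; apply: phiR.
by rewrite -phi_comp // f_lz.
Qed.

Theorem proposition6p5 (d1 d2 : Order.disp_t)
  (L1 : finTJoinSemilatticeType d1) (L2 : finTJoinSemilatticeType d2)
  (R1 : (L1 -> L1) -> Prop) (R2 : (L2 -> L2) -> Prop) :
  (1 < #|L1|)%N -> (1 < #|L2|)%N ->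
  good_subsemiring R1 -> good_subsemiring R2 ->
  (exists phi : (L1 -> L1) -> (L2 -> L2), semiring_iso R1 R2 phi) ->
  exists h : L1 -> L2, order_iso h.
Proof.
move=> _ _ [[_ _ _ R1_comp] K1 _ _] [_ K2 _ _] [phi phi_iso].
have [_ phi_inj phi_surj phi_join _] := phi_iso.
pose h a := phi (kconst a) \top.
have phi_kconst a : phi (kconst a) = kconst (h a).
  apply: left_zero_kconst (K2 \top) _.
  exact/(semiring_iso_left_zeroP R1_comp phi_iso (K1 a))/kconst_left_zero.
have h_inj : injective h.
  move=> a b hab; suff : kconst a = kconst b by move/(congr1 (@^~ \top)).
  by apply: phi_inj; rewrite ?phi_kconst ?hab.
have h_surj b : exists a, h a = b.
  have [f R1f phi_f] := phi_surj _ (K2 b).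
  have f_lz : left_zero R1 f.
    by apply/(semiring_iso_left_zeroP R1_comp phi_iso R1f); rewrite phi_f.
  by exists (f \top); rewrite /h -(left_zero_kconst (K1 \top) f_lz) phi_f.
have h_join : {morph h : x y / x `|` y}.
  by move=> x y; rewrite /h -fjoin_kconst phi_join.
by exists h; split; [apply: inj_surj_bij | apply: join_inj_leE].
Qed.
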